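(* Consider the production planning setting described in the context, in the non-overlapping case, with the discrete budgeted scenario set $\mathcal{U}^d$ (budget $\Gamma^d\in\{0,1,\dots,T\}$). Fix a production plan $\pmb{x}\in\mathbb{X}$ with cumulative productions $X_t=\sum_{i\in[t]}x_i$. Then the optimal value of the adversarial problem $\max_{\pmb{D}\in\mathcal{U}^d}\sum_{t\in[T]}\max\{f_I(X_t,D_t),f_B(X_t,D_t)\}$ equals the optimal value of $$\max\ \sum_{t\in[T]}\max\{f_I(X_t,\widehat{D}_t-\delta_t\Delta_t),\,f_B(X_t,\widehat{D}_t+\delta_t\Delta_t)\}\quad\text{s.t.}\quad \sum_{t\in[T]}\delta_t\le\Gamma^d,\ \ 0\le\delta_t\le 1\ (t\in[T]).$$ Moreover, this latter problem has an integral optimal solution $\pmb{\delta}^*\in\{0,1\}^T$ with $\sum_{t\in[T]}\delta^*_t=\Gamma^d$.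
   Context: There are $T\ge 1$ periods, $[T]=\{1,\dots,T\}$. Given are a production cost $c^P$, an inventory cost $c^I$, a backordering cost $c^B$ and a selling price $b^P$ (independent of the period), and a set $\mathbb{X}\subseteq\mathbb{R}^T_+$ of feasible production plans $\pmb{x}=(x_1,\dots,x_T)$ described by finitely many linear constraints. For a plan write $X_t=\sum_{i\in[t]}x_i$. For $t\in[T-1]$ let $f_I(X_t,D_t)=c^I(X_t-D_t)$ and $f_B(X_t,D_t)=c^B(D_t-X_t)$; for $t=T$ let $f_I(X_T,D_T)=c^I(X_T-D_T)+c^PX_T-b^PD_T$ and $f_B(X_T,D_T)=c^B(D_T-X_T)+c^PX_T-b^PX_T$. Nominal cumulative demands $\widehat{D}_t\ge 0$ satisfy $\widehat{D}_t\le\widehat{D}_{t+1}$, and deviations satisfy $0\le\Delta_t\le\widehat{D}_t$. The discrete budgeted scenario set is $\mathcal{U}^d=\{\pmb{D}\in\mathbb{R}^T: D_t\le D_{t+1}\ (t\in[T-1]),\ D_t\in[\widehat{D}_t-\Delta_t,\widehat{D}_t+\Delta_t]\ (t\in[T]),\ |\{t: D_t\ne\widehat{D}_t\}|\le\Gamma^d\}$ with integer $\Gamma^d\in\{0,\dots,T\}$. The non-overlapping case means $\widehat{D}_t+\Delta_t\le\widehat{D}_{t+1}-\Delta_{t+1}$ for all $t\in[T-1]$. *)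

(* Periods are 1-based: t = 1..T; functions nat -> R whose
   values outside [1,T] are irrelevant. *)
From HB Require Import structures.
From mathcomp Require Import all_boot all_order all_algebra.
Set Implicit Arguments. Unset Strict Implicit. Unset Printing Implicit Defensive.
Import Order.TTheory GRing.Theory Num.Theory.
Local Open Scope ring_scope.

Section Defs.
Variable R : realFieldType.

Definition cumprod (x : nat -> R) (t : nat) : R := \sum_(1 <= i < t.+1) x i.

Definition fI (T : nat) (cP cI bP : R) (t : nat) (X D : R) : R :=
  if t == T then cI * (X - D) + cP * X - bP * D else cI * (X - D).

Definition fB (T : nat) (cP cB bP : R) (t : nat) (X D : R) : R :=
  if t == T then cB * (D - X) + cP * X - bP * X else cB * (D - X).

Definition adv_obj (T : nat) (cP cI cB bP : R) (x D : nat -> R) : R :=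
  \sum_(1 <= t < T.+1)
     Num.max (fI T cP cI bP t (cumprod x t) (D t))
             (fB T cP cB bP t (cumprod x t) (D t)).

Definition relax_obj (T : nat) (cP cI cB bP : R) (x Dhat Delta delta : nat -> R) : R :=
  \sum_(1 <= t < T.+1)
     Num.max (fI T cP cI bP t (cumprod x t) (Dhat t - delta t * Delta t))
             (fB T cP cB bP t (cumprod x t) (Dhat t + delta t * Delta t)).

Definition in_Ud (T : nat) (Dhat Delta : nat -> R) (Gamma : nat) (D : nat -> R) : Prop :=
  [/\ (forall t, (1 <= t < T)%N -> D t <= D t.+1),
      (forall t, (1 <= t <= T)%N -> Dhat t - Delta t <= D t <= Dhat t + Delta t)
    & (count (fun t => D t != Dhat t) (iota 1 T) <= Gamma)%N].

Definition relax_feas (T : nat) (Gamma : nat) (delta : nat -> R) : Prop :=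
  \sum_(1 <= t < T.+1) delta t <= Gamma%:R /\
  (forall t, (1 <= t <= T)%N -> 0 <= delta t <= 1).

Definition in_plans (T m : nat) (A : 'I_m -> nat -> R) (b : 'I_m -> R) (x : nat -> R) : Prop :=
  (forall t, (1 <= t <= T)%N -> 0 <= x t) /\
  (forall k : 'I_m, \sum_(1 <= t < T.+1) A k t * x t <= b k).

End Defs.

(* The cost of period t, max {f_I(X_t, Dhat_t - d Delta_t), f_B(X_t, Dhat_t + d Delta_t)},
   is a maximum of two affine functions of the deviation level d, hence convex, so
   on [0, 1] it lies below its chord.  The relaxed objective is thus bounded by
   a linear function of delta which it matches at 0/1 points; with nonnegative
   gains and the budget sum delta <= Gamma, that linear function is maximised by
   the indicator of Gamma periods of largest gain.  This indicator is attained in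
   U^d by deviating, in each selected period, to whichever end of the interval
   is worse; non-overlapping intervals keep that scenario nondecreasing.
   Conversely, since f_I decreases and f_B increases in D, every scenario of U^d
   is dominated by the relaxation at the indicator of its deviating periods. *)

From HB Require Import structures.
From mathcomp Require Import all_boot all_order all_algebra.
From mathcomp Require Import ring lra.
Import Order.TTheory GRing.Theory Num.Theory.
Local Open Scope ring_scope.
Set Implicit Arguments.
Unset Strict Implicit.
Unset Printing Implicit Defensive.

Lemma sumr_indicator_card (R : semiRingType) (I : finType) (A : {pred I}) :
  \sum_i (i \in A)%:R = #|A|%:R :> R.
Proof.
rewrite -sum1_card natr_sum [RHS]big_mkcond.
by apply: eq_bigr => i _; case: (i \in A).
Qed.

Section CardinalityConstrainedLP.
Variables (R : realFieldType) (I : finType) (a : I -> R).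

Lemma exists_top_set (k : nat) : (k <= #|I|)%N ->
  exists2 S : {set I}, #|S| = k & forall i j, i \in S -> j \notin S -> a j <= a i.
Proof.
case/card_geqP=> s [uniq_s size_s _].
have cardS0 : #|[set i in s]| == k by rewrite cardsE (card_uniqP uniq_s) size_s.
have [S /eqP cardS Smax] :=
  @arg_maxP _ R _ _ (fun S : {set I} => #|S| == k)
    (fun S : {set I} => \sum_(i in S) a i) cardS0.
exists S => // i j iS jS.
have jSi : j \notin S :\ i by rewrite in_setD1 negb_and jS orbT.
have cardSij : #|j |: (S :\ i)| == k.
  by rewrite cardsU1 jSi -cardS (cardsD1 i S) iS.
have := Smax _ cardSij.
by rewrite big_setU1 //= (big_setD1 i iS) /= lerD2r.
Qed.

Hypothesis a_ge0 : forall i, 0 <= a i.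

Lemma top_set_maximizes (S : {set I}) :
    (forall i j, i \in S -> j \notin S -> a j <= a i) ->
  forall d : I -> R, (forall i, 0 <= d i <= 1) -> \sum_i d i <= #|S|%:R ->
  \sum_i d i * a i <= \sum_i (i \in S)%:R * a i.
Proof.
move=> topS d d01 sum_d.
pose th := \big[Num.max/0]_(j in ~: S) a j.
have th_ge0 : 0 <= th by rewrite /th; elim/big_ind: _ => // u v u0 _; rewrite le_max u0.
have th_le_S i : i \in S -> th <= a i.
  move=> iS; rewrite /th; elim/big_ind: _ => // [u v|j]; first by rewrite ge_max => -> ->.
  by rewrite in_setC; apply: topS.
have notS_le_th j : j \notin S -> a j <= th.
  by move=> jS; rewrite /th (bigD1 j) ?in_setC //= le_max lexx.
(* [th] is a dual price for the budget constraint. *)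
have tangent i : d i * a i <= (i \in S)%:R * a i + th * (d i - (i \in S)%:R).
  have /andP[d0 d1] := d01 i.
  case: (boolP (i \in S)) => [/th_le_S|/notS_le_th] ha /=.
    have : 0 <= (1 - d i) * (a i - th) by apply: mulr_ge0; lra.
    nra.
  have : 0 <= d i * (th - a i) by apply: mulr_ge0; lra.
  nra.
apply: le_trans (ler_sum _ (fun i _ => tangent i)) _.
rewrite big_split /= -mulr_sumr sumrB sumr_indicator_card gerDl.
by apply: mulr_ge0_le0 => //; rewrite subr_le0.
Qed.

End CardinalityConstrainedLP.

Lemma sum_indicator (R : semiRingType) (T : nat) (P : pred nat) :
  \sum_(1 <= t < T.+1) (P t)%:R = (count P (iota 1 T))%:R :> R.
Proof.
rewrite -sum1_count natr_sum [RHS]big_mkcond /index_iota subSS subn0.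
by apply: eq_bigr => t _; case: (P t).
Qed.

Lemma relax_feas_indicator (R : realFieldType) (T Gamma : nat) (P : pred nat) :
  (count P (iota 1 T) <= Gamma)%N -> relax_feas T Gamma (fun t => (P t)%:R : R).
Proof.
move=> countP; split; first by rewrite sum_indicator ler_nat.
by move=> t _; case: (P t); rewrite /= ?lexx ?ler01.
Qed.

Lemma relax_feas_top_indicator (R : realFieldType) (T Gamma : nat) (a : nat -> R) :
    (Gamma <= T)%N -> (forall t, (1 <= t <= T)%N -> 0 <= a t) ->
  exists2 P : pred nat, count P (iota 1 T) = Gamma &
    forall d, relax_feas T Gamma d ->
      \sum_(1 <= t < T.+1) d t * a t <= \sum_(1 <= t < T.+1) (P t)%:R * a t.
Proof.
move=> Gamma_le_T a_ge0.
have shift (F : nat -> R) : \sum_(1 <= t < T.+1) F t = \sum_(i < T) F i.+1.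
  by rewrite big_add1 big_mkord.
have [|S cardS topS] := @exists_top_set R 'I_T (fun i => a i.+1) Gamma.
  by rewrite card_ord.
pose P t := [exists i in S, i.+1 == t].
have PE (i : 'I_T) : P i.+1 = (i \in S).
  apply/existsP/idP => [[j /andP[jS /eqP/succn_inj/val_inj <-]] // | iS].
  by exists i; rewrite iS eqxx.
exists P.
  apply/eqP; rewrite -(eqr_nat R) -sum_indicator shift.
  by under eq_bigr do rewrite PE; rewrite sumr_indicator_card cardS.
move=> d [sum_d d01]; rewrite !shift.
have -> : \sum_(i < T) (P i.+1)%:R * a i.+1 = \sum_i (i \in S)%:R * a i.+1.
  by apply: eq_bigr => i _; rewrite PE.
apply: top_set_maximizes => //.
- by move=> i; exact: (a_ge0 i.+1 (ltn_ord i)).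
- by move=> i; exact: (d01 i.+1 (ltn_ord i)).
- by rewrite cardS -shift.
Qed.

Lemma max_affine_le_chord (R : realFieldType) (p q u v d : R) : 0 <= d <= 1 ->
  Num.max (p + d * u) (q + d * v) <=
  Num.max p q + d * (Num.max (p + u) (q + v) - Num.max p q).
Proof.
move=> /andP[d_ge0 d_le1].
have p_le : p <= Num.max p q by rewrite le_max lexx.
have q_le : q <= Num.max p q by rewrite le_max lexx orbT.
have pu_le : p + u <= Num.max (p + u) (q + v) by rewrite le_max lexx.
have qv_le : q + v <= Num.max (p + u) (q + v) by rewrite le_max lexx orbT.
move: (Num.max p q) (Num.max (p + u) (q + v)) p_le q_le pu_le qv_le => M0 M1 *.
rewrite ge_max; apply/andP; split.
- have : 0 <= (1 - d) * (M0 - p) by apply: mulr_ge0; lra.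
  have : 0 <= d * (M1 - (p + u)) by apply: mulr_ge0; lra.
  nra.
- have : 0 <= (1 - d) * (M0 - q) by apply: mulr_ge0; lra.
  have : 0 <= d * (M1 - (q + v)) by apply: mulr_ge0; lra.
  nra.
Qed.

Lemma fI_nonincreasing (R : realFieldType) (T : nat) (cP cI bP : R) t X D1 D2 :
  0 <= cI -> 0 <= bP -> D1 <= D2 -> fI T cP cI bP t X D2 <= fI T cP cI bP t X D1.
Proof.
move=> cI_ge0 bP_ge0 le_D.
have : 0 <= cI * (D2 - D1) by apply: mulr_ge0; lra.
have : 0 <= bP * (D2 - D1) by apply: mulr_ge0; lra.
by rewrite /fI; case: ifP => _; nra.
Qed.

Lemma fB_nondecreasing (R : realFieldType) (T : nat) (cP cB bP : R) t X D1 D2 :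
  0 <= cB -> D1 <= D2 -> fB T cP cB bP t X D1 <= fB T cP cB bP t X D2.
Proof.
move=> cB_ge0 le_D; have : 0 <= cB * (D2 - D1) by apply: mulr_ge0; lra.
by rewrite /fB; case: ifP => _; nra.
Qed.

Section AdversarialProblem.
Variables (R : realFieldType) (T : nat) (cP cI cB bP : R) (x Dhat Delta : nat -> R).
Hypotheses (cI_ge0 : 0 <= cI) (cB_ge0 : 0 <= cB) (bP_ge0 : 0 <= bP).
Hypothesis Delta_ge0 : forall t, (1 <= t <= T)%N -> 0 <= Delta t.

Local Notation FI t D := (fI T cP cI bP t (cumprod x t) D).
Local Notation FB t D := (fB T cP cB bP t (cumprod x t) D).

Definition relax_cost t (d : R) :=
  Num.max (FI t (Dhat t - d * Delta t)) (FB t (Dhat t + d * Delta t)).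

Definition deviation_gain t := relax_cost t 1 - relax_cost t 0.

Lemma relax_objE d :
  relax_obj T cP cI cB bP x Dhat Delta d = \sum_(1 <= t < T.+1) relax_cost t (d t).
Proof. by []. Qed.

Lemma relax_cost_le_chord t d : 0 <= d <= 1 ->
  relax_cost t d <= relax_cost t 0 + d * deviation_gain t.
Proof.
have FI_affine e : FI t (Dhat t - e * Delta t) =
    FI t (Dhat t) + e * (FI t (Dhat t - Delta t) - FI t (Dhat t)).
  by rewrite /fI; case: ifP => _; ring.
have FB_affine e : FB t (Dhat t + e * Delta t) =
    FB t (Dhat t) + e * (FB t (Dhat t + Delta t) - FB t (Dhat t)).
  by rewrite /fB; case: ifP => _; ring.
rewrite /deviation_gain /relax_cost !FI_affine !FB_affine !mul0r !mul1r !addr0.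
exact: max_affine_le_chord.
Qed.

Lemma deviation_gain_ge0 t : (1 <= t <= T)%N -> 0 <= deviation_gain t.
Proof.
move=> /Delta_ge0 Delta_t_ge0.
have lower_le : Dhat t - Delta t <= Dhat t by lra.
have upper_ge : Dhat t <= Dhat t + Delta t by lra.
rewrite /deviation_gain /relax_cost !mul0r !mul1r subr0 addr0 subr_ge0 ge_max.
by rewrite !le_max fI_nonincreasing // fB_nondecreasing // orbT.
Qed.

Lemma relax_obj_le_linear d : (forall t, (1 <= t <= T)%N -> 0 <= d t <= 1) ->
  relax_obj T cP cI cB bP x Dhat Delta d <=
  \sum_(1 <= t < T.+1) relax_cost t 0 + \sum_(1 <= t < T.+1) d t * deviation_gain t.
Proof.
move=> d01; rewrite relax_objE -big_split /=; apply: ler_sum_nat => t ht.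
exact: relax_cost_le_chord (d01 t ht).
Qed.

Lemma relax_obj_indicator (P : pred nat) :
  relax_obj T cP cI cB bP x Dhat Delta (fun t => (P t)%:R) =
  \sum_(1 <= t < T.+1) relax_cost t 0 + \sum_(1 <= t < T.+1) (P t)%:R * deviation_gain t.
Proof.
rewrite relax_objE -big_split /=; apply: eq_bigr => t _.
by case: (P t); rewrite ?mul1r ?mul0r ?addr0 // addrC subrK.
Qed.

Lemma adv_cost_le_relax_cost t D : Dhat t - Delta t <= D <= Dhat t + Delta t ->
  Num.max (FI t D) (FB t D) <= relax_cost t (D != Dhat t)%:R.
Proof.
move=> /andP[lower_le upper_ge]; rewrite /relax_cost.
have [->|_] := eqP; first by rewrite mul0r subr0 addr0.
by rewrite mul1r ge_max !le_max fI_nonincreasing // fB_nondecreasing // orbT.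
Qed.

Lemma adv_obj_le_relax_obj Gamma D : in_Ud T Dhat Delta Gamma D ->
  adv_obj T cP cI cB bP x D <=
  relax_obj T cP cI cB bP x Dhat Delta (fun t => (D t != Dhat t)%:R).
Proof.
case=> _ D_bounds _; rewrite relax_objE; apply: ler_sum_nat => t ht.
exact/adv_cost_le_relax_cost/D_bounds.
Qed.

Definition worst_deviation t :=
  if FB t (Dhat t + Delta t) <= FI t (Dhat t - Delta t)
  then Dhat t - Delta t else Dhat t + Delta t.

Lemma max_cost_worst_deviation t : (1 <= t <= T)%N ->
  Num.max (FI t (worst_deviation t)) (FB t (worst_deviation t)) = relax_cost t 1.
Proof.
move=> /Delta_ge0 Delta_t_ge0; rewrite /relax_cost /worst_deviation mul1r.
case: leP => [FB_le | /ltW FI_le].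
- rewrite max_l //; apply: le_trans FB_le.
  by apply: fB_nondecreasing => //; lra.
- rewrite max_r //; apply: le_trans FI_le.
  by apply: fI_nonincreasing => //; lra.
Qed.

Hypothesis nonoverlap :
  forall t, (1 <= t < T)%N -> Dhat t + Delta t <= Dhat t.+1 - Delta t.+1.

Lemma exists_worst_scenario Gamma (P : pred nat) :
  (count P (iota 1 T) <= Gamma)%N ->
  exists2 D, in_Ud T Dhat Delta Gamma D &
    adv_obj T cP cI cB bP x D =
    relax_obj T cP cI cB bP x Dhat Delta (fun t => (P t)%:R).
Proof.
move=> countP; pose D t := if P t then worst_deviation t else Dhat t.
have D_bounds t : (1 <= t <= T)%N -> Dhat t - Delta t <= D t <= Dhat t + Delta t.
  move=> /Delta_ge0 Delta_t_ge0; rewrite /D /worst_deviation.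
  by case: (P t); [case: ifP => _|]; apply/andP; split; lra.
exists D; first split.
- move=> t ht; have /andP[t_ge1 t_lt_T] := ht.
  have t_in : (1 <= t <= T)%N by rewrite t_ge1 ltnW.
  have /andP[_ D_t_le] := D_bounds t t_in.
  have /andP[D_succ_ge _] := D_bounds t.+1 t_lt_T.
  have := nonoverlap ht; lra.
- exact: D_bounds.
- apply: leq_trans countP; apply: sub_count => t.
  by rewrite /D; case: (P t) => //; rewrite eqxx.
rewrite relax_objE; apply: eq_big_nat => t ht; rewrite /D.
case: (P t); first exact: max_cost_worst_deviation.
by rewrite /relax_cost mul0r subr0 addr0.
Qed.

End AdversarialProblem.

Theorem lemma1 (R : realFieldType) (T : nat) (cP cI cB bP : R)
  (m : nat) (A : 'I_m -> nat -> R) (b : 'I_m -> R)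
  (Dhat Delta : nat -> R) (Gamma : nat) (x : nat -> R) :
  (0 < T)%N ->
  0 <= cP -> 0 <= cI -> 0 <= cB -> 0 <= bP ->
  (forall t, (1 <= t <= T)%N -> 0 <= Dhat t) ->
  (forall t, (1 <= t < T)%N -> Dhat t <= Dhat t.+1) ->
  (forall t, (1 <= t <= T)%N -> 0 <= Delta t <= Dhat t) ->
  (forall t, (1 <= t < T)%N -> Dhat t + Delta t <= Dhat t.+1 - Delta t.+1) ->
  (Gamma <= T)%N ->
  in_plans T A b x ->
  exists delta : nat -> R,
    [/\ relax_feas T Gamma delta,
        (forall d, relax_feas T Gamma d ->
           relax_obj T cP cI cB bP x Dhat Delta d
             <= relax_obj T cP cI cB bP x Dhat Delta delta),
        (forall t, (1 <= t <= T)%N -> delta t = 0 \/ delta t = 1),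
        \sum_(1 <= t < T.+1) delta t = Gamma%:R
      & exists D : nat -> R,
          [/\ in_Ud T Dhat Delta Gamma D,
              adv_obj T cP cI cB bP x D
                = relax_obj T cP cI cB bP x Dhat Delta delta
            & forall D', in_Ud T Dhat Delta Gamma D' ->
                adv_obj T cP cI cB bP x D'
                  <= relax_obj T cP cI cB bP x Dhat Delta delta]].
Proof.
move=> _ _ cI_ge0 cB_ge0 bP_ge0 _ _ Delta_bounds nonoverlap Gamma_le_T _.
have Delta_ge0 t : (1 <= t <= T)%N -> 0 <= Delta t by case/Delta_bounds/andP.
have [P countP P_opt] := relax_feas_top_indicator Gamma_le_T
  (deviation_gain_ge0 cP x Dhat cI_ge0 cB_ge0 bP_ge0 Delta_ge0).
have P_feas : relax_feas T Gamma (fun t => (P t)%:R : R).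
  by apply: relax_feas_indicator; rewrite countP.
have P_max d : relax_feas T Gamma d -> relax_obj T cP cI cB bP x Dhat Delta d
    <= relax_obj T cP cI cB bP x Dhat Delta (fun t => (P t)%:R).
  move=> d_feas; apply: le_trans (relax_obj_le_linear _ _ _ _ _ _ _ d_feas.2) _.
  by rewrite relax_obj_indicator lerD2l P_opt.
exists (fun t => (P t)%:R); split=> //.
- by move=> t _; case: (P t); [right | left].
- by rewrite sum_indicator countP.
have [D D_in D_val] := exists_worst_scenario cP x cI_ge0 cB_ge0 bP_ge0 Delta_ge0
  nonoverlap (eq_leq countP).
exists D; split=> // D' D'_in.
apply: le_trans (adv_obj_le_relax_obj cP x cI_ge0 cB_ge0 bP_ge0 D'_in) _.
by apply/P_max/relax_feas_indicator; case: D'_in.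
Qed.
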